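(* For any $t>0$, provided that $Rr(T)\ge1$, \[\{\exists z\in L_T\setminus B(0,R): h_T(z)\le t\}\subseteq\Big\{\max_{y\in L_T(0,R)}\xi_T(y)\ge qR/t\Big\}.\] As a result, \[\mathbb{P}\big(\exists z\in L_T\setminus B(0,R): h_T(z)\le t\big)\le C_de\,q^{-\alpha}R^{d-\alpha}t^\alpha.\]
   Context: $(\xi(z))_{z\in\mathbb{Z}^d}$ are i.i.d. with $\mathbb{P}(\xi(z)>x)=x^{-\alpha}$ for $x\ge1$, $\alpha>d$. $|\cdot|$ is the $\ell_1$-norm, $B(z,R)$ the open $\ell_1$-ball. $q=d/(\alpha-d)$, $a(T)=(T/\log T)^q$, $r(T)=(T/\log T)^{q+1}$, $L_T=\{z\in\mathbb{R}^d:r(T)z\in\mathbb{Z}^d\}$, $L_T(z,R)=L_T\cap B(z,R)$, $\xi_T(z)=\xi(r(T)z)/a(T)$. For $z\in L_T$, \[h_T(z)=\inf\Big\{\sum_{j=1}^n q\frac{|y_{j-1}-y_j|}{\xi_T(y_j)}: n\ge0,\ y_0,\dots,y_n\in L_T,\ y_0=z,\ y_n=0\Big\}.\] The constant $C_d>0$ is such that $\#L_T(0,R)\le C_dR^dr(T)^d$ whenever $Rr(T)>1$. *)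

From HB Require Import structures.
From mathcomp Require Import all_boot all_order all_algebra.
From mathcomp Require Import all_classical all_reals all_analysis.
Set Implicit Arguments. Unset Strict Implicit. Unset Printing Implicit Defensive.
Import Order.TTheory GRing.Theory Num.Theory.
Local Open Scope classical_set_scope.
Local Open Scope ring_scope.

Section Defs.
Variables (R : realType) (d : nat) (alpha : R).

Definition norm1 (z : 'rV[R]_d) : R := \sum_(i < d) `|z ord0 i|.

Definition l1ball (z : 'rV[R]_d) (Rad : R) : set 'rV[R]_d :=
  [set y | norm1 (y - z) < Rad].

Definition qexp : R := d%:R / (alpha - d%:R).
Definition aT (T : R) : R := (T / ln T) `^ qexp.
Definition rT (T : R) : R := (T / ln T) `^ (qexp + 1).

Definition LT (T : R) (z : 'rV[R]_d) : bool :=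
  [forall i, rT T * z ord0 i \is a Num.int].

Definition LTball (T : R) (z : 'rV[R]_d) (Rad : R) : set 'rV[R]_d :=
  [set y | LT T y /\ l1ball z Rad y].

(* the lattice point r(T) y (exact when y \in L_T) *)
Definition toZ (T : R) (y : 'rV[R]_d) : 'rV[int]_d :=
  \row_i Num.floor (rT T * y ord0 i).

Definition xiT (xi : 'rV[int]_d -> R) (T : R) (y : 'rV[R]_d) : R :=
  xi (toZ T y) / aT T.

(* cost of the path y_0 = z, y_1, ..., y_n (ys = [:: y_1; ...; y_n]) *)
Definition path_cost (xi : 'rV[int]_d -> R) (T : R) (z : 'rV[R]_d)
    (ys : seq 'rV[R]_d) : R :=
  \sum_(j < size ys)
    qexp * norm1 (nth z (z :: ys) j - nth z ys j) / xiT xi T (nth z ys j).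

Definition hT (xi : 'rV[int]_d -> R) (T : R) (z : 'rV[R]_d) : R :=
  inf [set c | exists ys : seq 'rV[R]_d,
         all (LT T) ys /\ last z ys = 0 /\ c = path_cost xi T z ys].
End Defs.
Arguments norm1 {R} d z.
Arguments l1ball {R} d z Rad.
Arguments LT {R} d alpha T z.
Arguments LTball {R} d alpha T z Rad.
Arguments toZ {R} d alpha T y.
Arguments xiT {R} d alpha xi T y.
Arguments path_cost {R} d alpha xi T z ys.
Arguments hT {R} d alpha xi T z.

Definition mutually_independent d0 (Om : measurableType d0) (R : realType)
    (P : probability Om R) (I : eqType) (X : I -> {RV P >-> R}) : Prop :=
  forall (J : seq I) (B : I -> set R), uniq J ->
    (forall i, measurable (B i)) ->
    P (\big[setI/setT]_(i <- J) (X i @^-1` B i)) =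
    (\prod_(i <- J) P (X i @^-1` B i))%E.

(* A path from a point [z] outside [B(0, Rad)] to the origin has to cross the ball, and a
   step landing at [y] costs at least [q / xi_T(y)] times its length.  With [M] the maximum of
   [xi_T] over the finitely many points of [L_T(0, Rad)], every such path thus costs at least
   [q Rad / M], so [h_T(z) <= t] forces [M >= q Rad / t].  The probability bound is then a
   union bound over these at most [C_d e Rad^d r(T)^d] points, each of which exceeds the level
   with probability [(q Rad a(T) / t)^(-alpha)], using [r(T)^d a(T)^(-alpha) = 1]. *)

From HB Require Import structures.
From mathcomp Require Import all_boot all_order all_algebra.
From mathcomp Require Import all_classical all_reals all_analysis.
From mathcomp Require Import ring measurable_realfun.
Set Implicit Arguments. Unset Strict Implicit. Unset Printing Implicit Defensive.
Import Order.TTheory GRing.Theory Num.Theory.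
Local Open Scope classical_set_scope.
Local Open Scope ring_scope.

Section L1Norm.
Variables (R : realType) (d : nat).
Implicit Types a b : 'rV[R]_d.

Lemma norm1_ge0 a : 0 <= norm1 d a.
Proof. exact: sumr_ge0. Qed.

Lemma norm10 : norm1 d (0 : 'rV[R]_d) = 0.
Proof. by rewrite /norm1 big1 // => i _; rewrite mxE normr0. Qed.

Lemma ler_norm1D a b : norm1 d (a + b) <= norm1 d a + norm1 d b.
Proof. by rewrite /norm1 -big_split; apply: ler_sum => i _; rewrite mxE ler_normD. Qed.

End L1Norm.

Section Lattice.
Variables (R : realType) (d : nat) (alpha T : R).

Definition ofZ (k : 'rV[int]_d) : 'rV[R]_d := \row_i ((k ord0 i)%:~R / rT d alpha T).

Lemma LT0 : LT d alpha T 0.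
Proof. by apply/forallP => i; rewrite mxE mulr0 rpred0. Qed.

Hypothesis rT_neq0 : rT d alpha T != 0.

Lemma LT_ofZ k : LT d alpha T (ofZ k).
Proof. by apply/forallP => i; rewrite mxE mulrC divfK // intr_int. Qed.

Lemma ofZ_toZ z : LT d alpha T z -> ofZ (toZ d alpha T z) = z.
Proof.
move=> /forallP Lz; apply/rowP => i; rewrite !mxE.
by have := Lz i; rewrite intrEfloor => /eqP ->; rewrite mulrC mulKf.
Qed.

Lemma exists_LTP (Q : 'rV[R]_d -> Prop) :
  (exists z, LT d alpha T z /\ Q z) <-> exists k, Q (ofZ k).
Proof.
split=> [[z [Lz Qz]]|[k Qk]]; last by exists (ofZ k); split=> //; exact: LT_ofZ.
by exists (toZ d alpha T z); rewrite ofZ_toZ.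
Qed.

Lemma exists_LT_seqP (Q : seq 'rV[R]_d -> Prop) :
  (exists ys, all (LT d alpha T) ys /\ Q ys) <-> exists ks, Q (map ofZ ks).
Proof.
split=> [[ys [Lys Qys]]|[ks Qks]].
  exists (map (toZ d alpha T) ys); rewrite -map_comp map_id_in // => y y_ys.
  by apply: ofZ_toZ; exact: (allP Lys).
by exists (map ofZ ks); split=> //; rewrite all_map; apply/allP => k _; exact: LT_ofZ.
Qed.

End Lattice.
Arguments ofZ {R} d alpha T k.

Lemma inf_le_approxP (R : realType) (S : set R) t :
  S !=set0 -> has_lbound S ->
  inf S <= t <-> forall n : nat, exists2 c, S c & c <= t + n.+1%:R^-1.
Proof.
move=> S0 Slb; split=> [infS n|approx].
  have /(inf_lt S0)[c Sc lt_c] : inf S < t + n.+1%:R^-1.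
    by apply: le_lt_trans infS _; rewrite ltrDl.
  by exists c => //; exact: ltW.
rewrite leNgt; apply/negP => /ltr_add_invr[n lt_inf].
have [c Sc le_c] := approx n.
by have := lt_le_trans (le_lt_trans le_c lt_inf) (ge_inf Slb Sc); rewrite ltxx.
Qed.

Lemma seq_has_argmax (T : eqType) (R : realDomainType) (f : T -> R) (s : seq T) :
  s != [::] -> exists2 m, m \in s & forall y, y \in s -> f y <= f m.
Proof.
elim: s => [//|x s IH] _; have [->|/IH[m ms max_m]] := eqVneq s [::].
  by exists x; rewrite ?mem_head // => y; rewrite inE => /eqP ->.
have [le_xm|lt_mx] := leP (f x) (f m).
  by exists m; rewrite ?inE ?ms ?orbT // => y; rewrite inE => /predU1P[->|/max_m].
exists x; rewrite ?mem_head // => y; rewrite inE => /predU1P[->//|/max_m le_m].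
exact: le_trans le_m (ltW lt_mx).
Qed.

Lemma exists_enum_of_bounded_uniq (R : realType) (T : eqType) (S : set T) (K : R) :
  (forall s : seq T, uniq s -> all (fun y => y \in S) s -> (size s)%:R <= K) ->
  exists s : seq T, [/\ uniq s, all (fun y => y \in S) s & forall y, S y -> y \in s].
Proof.
move=> bounded; apply: contrapT => no_enum.
have large n : exists s : seq T, [/\ uniq s, all (fun y => y \in S) s & (n <= size s)%N].
  elim: n => [|n [s [us Ss le_ns]]]; first by exists [::].
  have /existsNP[y /not_implyP[Sy /negP y_s]] : ~ forall y, S y -> y \in s.
    by move=> cover; apply: no_enum; exists s.
  by exists (y :: s); rewrite /= us Ss y_s !andbT; split=> //; exact/mem_set.
have [s [us Ss le_s]] := large (Num.truncn K).+1.
have := le_lt_trans (bounded s us Ss) (truncnS_gt K).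
by rewrite ltr_nat ltnS leqNgt le_s.
Qed.

Section PathCost.
Variables (R : realType) (d : nat) (alpha : R) (xi : 'rV[int]_d -> R) (T : R).
Local Notation q := (qexp d alpha).
Local Notation X := (xiT d alpha xi T).
Local Notation cost := (path_cost d alpha xi T).

Definition path_costs (z : 'rV[R]_d) : set R :=
  [set c | exists ys, all (LT d alpha T) ys /\ last z ys = 0 /\ c = cost z ys].

Lemma path_cost_cons z y ys :
  cost z (y :: ys) = q * norm1 d (z - y) / X y + cost y ys.
Proof.
rewrite /path_cost big_ord_recl; congr (_ + _); apply: eq_bigr => j _ /=.
have lt_j : (j < size ys)%N by [].
by rewrite (set_nth_default y z lt_j) (set_nth_default y z (s := y :: ys)) // ltnS ltnW.
Qed.

Lemma path_costs_neq0 z : path_costs z !=set0.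
Proof. by exists (cost z [:: 0]), [:: 0]; rewrite /= LT0. Qed.

Hypotheses (q_ge0 : 0 <= q) (X_gt0 : forall y, 0 < X y).

Lemma path_cost_ge0 z ys : 0 <= cost z ys.
Proof.
rewrite /path_cost; apply: sumr_ge0 => j _.
by rewrite divr_ge0 ?(ltW (X_gt0 _)) // mulr_ge0 // norm1_ge0.
Qed.

Lemma path_costs_lbound z : has_lbound (path_costs z).
Proof. by exists 0 => _ [ys [_ [_ ->]]]; exact: path_cost_ge0. Qed.

Section FarFromOrigin.
Variables (M Rad : R).
Hypotheses (M_gt0 : 0 < M)
  (X_le_M : forall y, LT d alpha T y -> norm1 d y < Rad -> X y <= M).

(* A step landing inside the ball costs at least [q / M] times its length; once a step
   lands outside, the rest of the path alone has length at least [Rad]. *)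
Lemma path_cost_ge_min ys z : all (LT d alpha T) ys -> last z ys = 0 ->
  q / M * Num.min (norm1 d z) Rad <= cost z ys.
Proof.
have qM_ge0 : 0 <= q / M by rewrite divr_ge0 // ltW.
elim: ys z => [|y ys IH] z /=.
  move=> _ ->; rewrite /path_cost big_ord0 norm10.
  by apply: mulr_ge0_le0 => //; rewrite ge_min lexx.
move=> /andP[Ly Lys] /(IH y Lys) {}IH; rewrite path_cost_cons.
have [y_in|y_out] := ltP (norm1 d y) Rad.
  have step : q / M * norm1 d (z - y) <= q * norm1 d (z - y) / X y.
    rewrite mulrAC; apply: ler_wpM2l; first by rewrite mulr_ge0 ?norm1_ge0.
    by rewrite lef_pV2 ?posrE ?X_le_M.
  apply: le_trans (lerD step IH); rewrite -mulrDr; apply: ler_wpM2l => //.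
  by rewrite (min_idPl (ltW y_in)) ge_min -{1}(subrK y z) ler_norm1D.
have step_ge0 : 0 <= q * norm1 d (z - y) / X y.
  by rewrite divr_ge0 ?(ltW (X_gt0 _)) // mulr_ge0 // norm1_ge0.
apply: le_trans (lerD step_ge0 IH).
by rewrite add0r; apply: ler_wpM2l; rewrite // (min_idPr y_out) ge_min lexx orbT.
Qed.

Lemma hT_ge_far z : Rad <= norm1 d z -> q * Rad / M <= hT d alpha xi T z.
Proof.
move=> far; apply: lb_le_inf; first exact: path_costs_neq0.
move=> _ [ys [Lys [last_ys ->]]].
by have := path_cost_ge_min Lys last_ys; rewrite (min_idPr far) mulrAC.
Qed.

End FarFromOrigin.

Lemma far_hT_le_has_large_xiT Rad t (s : seq 'rV[R]_d) z : 0 < Rad -> 0 < t ->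
  (forall y, LTball d alpha T 0 Rad y -> y \in s) ->
  ~ l1ball d 0 Rad z -> hT d alpha xi T z <= t ->
  exists2 y, y \in s & q * Rad / t <= X y.
Proof.
move=> Rad_gt0 t_gt0 cover /negP; rewrite /l1ball /= subr0 -leNgt => far hTz.
have s_neq0 : s != [::].
  have : 0 \in s by apply: cover; split; rewrite ?LT0 // /l1ball /= subr0 norm10.
  by apply: contraTneq => ->.
have [m ms max_m] := seq_has_argmax X s_neq0; exists m => //.
have max_ball y : LT d alpha T y -> norm1 d y < Rad -> X y <= X m.
  by move=> Ly y_in; apply/max_m/cover; split; rewrite // /l1ball /= subr0.
have := le_trans (hT_ge_far (X_gt0 m) max_ball far) hTz.
by rewrite !ler_pdivrMr ?X_gt0 // [t * _]mulrC.
Qed.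

Lemma hT_le_latticeP t z : rT d alpha T != 0 ->
  hT d alpha xi T z <= t <->
  forall n : nat, exists ks, last z (map (ofZ d alpha T) ks) = 0 /\
    cost z (map (ofZ d alpha T) ks) <= t + n.+1%:R^-1.
Proof.
move=> rT_neq0; rewrite [hT _ _ _ _ _]/= (inf_le_approxP t (path_costs_neq0 z)) //;
  last exact: path_costs_lbound.
split=> approx n; have := approx n.
  move=> [_ [ys [Lys [last_ys ->]]] le_c].
  by apply/(exists_LT_seqP rT_neq0 (fun ys => last z ys = 0 /\ cost z ys <= _)); exists ys.
move=> /(exists_LT_seqP rT_neq0 (fun ys => last z ys = 0 /\ cost z ys <= _)).
by move=> [ys [Lys [last_ys le_c]]]; exists (cost z ys) => //; exists ys.
Qed.

End PathCost.

Lemma qexp_gt0 (R : realType) (d : nat) (alpha : R) :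
  (0 < d)%N -> d%:R < alpha -> 0 < qexp d alpha.
Proof. by move=> d_gt0 lt_d_alpha; rewrite divr_gt0 ?ltr0n // subr_gt0. Qed.

Section Scales.
Variables (R : realType) (d : nat) (alpha T : R).
Hypothesis T_gt1 : 1 < T.

Let TlnT_gt0 : 0 < T / ln T.
Proof. by rewrite divr_gt0 ?ln_gt0 // (lt_trans ltr01). Qed.

Lemma rT_gt0 : 0 < rT d alpha T.
Proof. exact: powR_gt0. Qed.

Lemma aT_gt0 : 0 < aT d alpha T.
Proof. exact: powR_gt0. Qed.

(* [q (alpha - d) = d] makes the two powers of [T / ln T] cancel. *)
Lemma rT_expn_aT_powR : alpha != d%:R ->
  rT d alpha T ^+ d * aT d alpha T `^ (- alpha) = 1.
Proof.
move=> alpha_neq_d; rewrite /rT /aT -powR_mulrn ?powR_ge0 // -!powRrM -powRD;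
  last by rewrite (gt_eqF TlnT_gt0) implybT.
suff -> : (qexp d alpha + 1) * d%:R + qexp d alpha * - alpha = 0 by rewrite powRr0.
by rewrite /qexp; field; rewrite subr_eq0.
Qed.

End Scales.

Section Measurability.
Variables (d0 : measure_display) (Om : measurableType d0) (R : realType).

Lemma measurable_exists (K : countType) (F : K -> set Om) :
  (forall k, measurable (F k)) -> measurable [set w | exists k, F k w].
Proof.
move=> mF; rewrite (_ : [set w | _] = \bigcup_k F k).
  exact: countable_bigcupT_measurable (countableP _) mF.
by apply/seteqP; split=> w /= [k]; [exists k | move=> _; exists k].
Qed.

Lemma measurable_forall_nat (F : nat -> set Om) :
  (forall n, measurable (F n)) -> measurable [set w | forall n, F n w].
Proof.
move=> mF; rewrite (_ : [set w | _] = \bigcap_n F n); first exact: bigcapT_measurable.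
by apply/seteqP; split=> w /= Fw n; [move=> _|]; exact: Fw.
Qed.

Lemma measurable_propI (Q : Prop) (F : set Om) :
  measurable F -> measurable [set w | Q /\ F w].
Proof.
move=> mF; have [q|nq] := pselect Q.
  by rewrite (_ : [set w | _] = F) //; apply/seteqP; split=> w /= => [[]|].
by rewrite (_ : [set w | _] = set0) //; apply/seteqP; split=> w /= => [[]|].
Qed.

Lemma measurable_le_fun (f g : Om -> R) :
  measurable_fun setT f -> measurable_fun setT g -> measurable [set w | f w <= g w].
Proof.
by move=> mf mg; rewrite -[X in measurable X]setTI; exact: measurable_fun_le.
Qed.

Lemma measurable_lt_fun (f g : Om -> R) :
  measurable_fun setT f -> measurable_fun setT g -> measurable [set w | f w < g w].
Proof.
move=> mf mg; rewrite (_ : [set w | _] = ~` [set w | g w <= f w]).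
  exact/measurableC/measurable_le_fun.
by apply/seteqP; split=> w /=; rewrite ltNge => /negP.
Qed.

Lemma content_bigsetU_seq_le (mu : {content set Om -> \bar R}) (I : Type)
    (s : seq I) (A : I -> set Om) (c : R) :
  (forall i, measurable (A i)) -> (forall i, (mu (A i) <= c%:E)%E) ->
  (mu (\big[setU/set0]_(i <- s) A i) <= ((size s)%:R * c)%:E)%E.
Proof.
move=> mA le_c; elim: s => [|i s IH]; first by rewrite big_nil measure0 mul0r.
rewrite big_cons /= -addn1 natrD mulrDl mul1r EFinD addeC.
exact: le_trans (measureU2 _ (mA i) (bigsetU_measurable _ _)) (leeD (le_c i) IH).
Qed.

(* Comparing with [P [y < f]] for [y] slightly below [x] turns the strict tail into a
   non-strict one; [y] is chosen so that [y `^ (- alpha) = x `^ (- alpha) + e]. *)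
Lemma pareto_tail_ge (P : probability Om R) (alpha : R) (f : Om -> R) (x : R) :
  0 < alpha -> measurable_fun setT f ->
  (forall y, 1 <= y -> P [set w | y < f w] = (y `^ (- alpha))%:E) -> 0 < x ->
  (P [set w | (x <= f w)%R] <= (x `^ (- alpha))%:E)%E.
Proof.
move=> alpha_gt0 mf tail x_gt0.
have mge y : measurable [set w | y <= f w] by apply: measurable_le_fun.
have mgt y : measurable [set w | y < f w] by apply: measurable_lt_fun.
apply/lee_addgt0Pr => e e_gt0; rewrite -EFinD.
set z := x `^ (- alpha) + e.
have z_gt0 : 0 < z by rewrite ltr_wpDl ?powR_ge0.
have [z_ge1|z_lt1] := leP 1 z.
  by apply: le_trans (probability_le1 P (mge x)) _; rewrite lee_fin.
set y := z `^ (- alpha^-1).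
have yz : y `^ (- alpha) = z.
  by rewrite -powRrM mulrNN mulVf ?gt_eqF // powRr1 // ltW.
have y_ge1 : 1 <= y.
  rewrite /y powRN invf_ge1 ?powR_gt0 //.
  have inv_alpha_ge0 : 0 <= alpha^-1 by rewrite invr_ge0 ltW.
  have := ge0_ler_powR inv_alpha_ge0 (ltW z_gt0) ler01 (ltW z_lt1).
  by rewrite powR1.
have lt_yx : y < x.
  rewrite ltNge; apply/negP => le_xy.
  have : y `^ (- alpha) <= x `^ (- alpha).
    rewrite !powRN lef_pV2 ?posrE ?powR_gt0 ?(lt_le_trans ltr01 y_ge1) //.
    exact: (ge0_ler_powR (ltW alpha_gt0) (ltW x_gt0) (le_trans ler01 y_ge1) le_xy).
  by rewrite yz leNgt ltrDl e_gt0.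
rewrite -yz -tail //; apply: le_measure; rewrite ?inE //.
by move=> w /=; exact: lt_le_trans.
Qed.

Lemma pareto_bigsetU_le (P : probability Om R) (alpha : R) (I K : Type)
    (xi : K -> Om -> R) (g : I -> K) (s : seq I) (x : R) :
  0 < alpha -> (forall k, measurable_fun setT (xi k)) ->
  (forall k y, 1 <= y -> P [set w | y < xi k w] = (y `^ (- alpha))%:E) -> 0 < x ->
  (P (\big[setU/set0]_(i <- s) [set w | (x <= xi (g i) w)%R]) <=
   ((size s)%:R * x `^ (- alpha))%:E)%E.
Proof.
move=> alpha_gt0 mxi tail x_gt0; apply: content_bigsetU_seq_le => i.
  exact: measurable_le_fun.
exact: pareto_tail_ge alpha_gt0 (mxi _) (tail _) x_gt0.
Qed.

End Measurability.

Section RandomField.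
Variables (d0 : measure_display) (Om : measurableType d0) (R : realType).
Variables (d : nat) (alpha T : R) (xi : 'rV[int]_d -> Om -> R).
Hypotheses (mxi : forall k, measurable_fun setT (xi k))
  (xi_gt0 : forall k w, 0 < xi k w).
Local Notation xi_at w := (fun k => xi k w).

Lemma measurable_path_cost z ys :
  measurable_fun setT (fun w => path_cost d alpha (xi_at w) T z ys).
Proof.
apply: measurable_sum => j; rewrite /xiT.
set c := qexp d alpha * _; set k := toZ d alpha T _.
rewrite (_ : (fun w => _) = fun w => c * aT d alpha T * xi k w `^ (-1)).
  apply: measurable_funM; first exact: measurable_cst.
  exact: measurableT_comp (measurable_powR _) (mxi k).
by apply/funext => w; rewrite powR_inv1 ?ltW // invf_div mulrA.
Qed.

Hypotheses (T_gt1 : 1 < T) (q_ge0 : 0 <= qexp d alpha).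

Lemma xiT_gt0 w y : 0 < xiT d alpha (xi_at w) T y.
Proof. by rewrite divr_gt0 ?aT_gt0. Qed.

Lemma measurable_far_hT_le Rad t :
  measurable [set w | exists z, LT d alpha T z /\ ~ l1ball d 0 Rad z /\
                        hT d alpha (xi_at w) T z <= t].
Proof.
have rT_neq0 : rT d alpha T != 0 by rewrite gt_eqF ?rT_gt0.
rewrite (_ : [set w | _] = [set w | exists k, ~ l1ball d 0 Rad (ofZ d alpha T k) /\
    forall n : nat, exists ks, last (ofZ d alpha T k) (map (ofZ d alpha T) ks) = 0 /\
      path_cost d alpha (xi_at w) T (ofZ d alpha T k) (map (ofZ d alpha T) ks)
        <= t + n.+1%:R^-1]).
  apply: measurable_exists => k; apply: measurable_propI.
  apply: measurable_forall_nat => n; apply: measurable_exists => ks.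
  apply: measurable_propI; apply: measurable_le_fun; first exact: measurable_path_cost.
  exact: measurable_cst.
apply/seteqP; split=> w /=.
  move=> /(exists_LTP rT_neq0 (fun z => ~ _ /\ _)) [k [far hTk]].
  by exists k; split=> //; apply/(hT_le_latticeP q_ge0 (xiT_gt0 w)).
move=> [k [far approx]]; apply/(exists_LTP rT_neq0 (fun z => ~ _ /\ _)).
by exists k; split=> //; apply/(hT_le_latticeP q_ge0 (xiT_gt0 w)).
Qed.

End RandomField.

Lemma count_mul_tail_le (R : realType) (d : nat) (alpha Cd T Rad t N : R) :
  (0 < d)%N -> d%:R < alpha -> 1 < T -> 0 < Rad -> 0 < t ->
  N <= Cd * (expR d%:R^-1 * Rad) ^+ d * rT d alpha T ^+ d ->
  N * (qexp d alpha * Rad / t * aT d alpha T) `^ (- alpha) <=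
  Cd * expR 1 * qexp d alpha `^ (- alpha) * Rad `^ (d%:R - alpha) * t `^ alpha.
Proof.
move=> d_gt0 lt_d_alpha T_gt1 Rad_gt0 t_gt0 le_N.
have q_ge0 := ltW (qexp_gt0 d_gt0 lt_d_alpha).
have a_ge0 := ltW (aT_gt0 d alpha T_gt1).
have [Rad_ge0 t_ge0] := (ltW Rad_gt0, ltW t_gt0).
set q := qexp d alpha; set a := aT d alpha T.
have e_d : expR d%:R^-1 ^+ d = expR 1 :> R.
  by rewrite -expRM_natl mulfV // pnatr_eq0 -lt0n.
have Rad_pow : Rad `^ (d%:R - alpha) = Rad ^+ d * Rad `^ (- alpha).
  by rewrite powRD ?(gt_eqF Rad_gt0) ?implybT // powR_mulrn.
have t_pow : t^-1 `^ (- alpha) = t `^ alpha.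
  by rewrite -powR_inv1 // -powRrM mulN1r opprK.
have qR_ge0 : 0 <= q * Rad := mulr_ge0 q_ge0 Rad_ge0.
have qRt_ge0 : 0 <= q * Rad / t by rewrite divr_ge0.
have ti_ge0 : 0 <= t^-1 by rewrite invr_ge0.
rewrite powRM // powRM // powRM // t_pow Rad_pow.
apply: le_trans (ler_wpM2r _ le_N) _; first by rewrite !mulr_ge0 ?powR_ge0.
rewrite exprMn e_d le_eqVlt; apply/orP; left; apply/eqP.
have ra : rT d alpha T ^+ d * a `^ (- alpha) = 1.
  exact: rT_expn_aT_powR T_gt1 (negbT (gt_eqF lt_d_alpha)).
rewrite [in RHS](_ : t `^ alpha = t `^ alpha * (rT d alpha T ^+ d * a `^ (- alpha))).
  by ring.
by rewrite ra mulr1.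
Qed.

(* The counting bound needs [1 < Rad' * rT], so it is applied to the radius
   [expR d^-1 * Rad]; this is the origin of the factor [expR 1]. *)
Lemma LTball_size_le (R : realType) (d : nat) (alpha Cd T Rad : R) :
  (0 < d)%N -> 0 < Rad -> 1 <= Rad * rT d alpha T ->
  (forall Rad', 1 < Rad' * rT d alpha T ->
     forall s, uniq s -> all (fun y => y \in LTball d alpha T 0 Rad') s ->
       (size s)%:R <= Cd * Rad' ^+ d * rT d alpha T ^+ d) ->
  forall s, uniq s -> all (fun y => y \in LTball d alpha T 0 Rad) s ->
    (size s)%:R <= Cd * (expR d%:R^-1 * Rad) ^+ d * rT d alpha T ^+ d.
Proof.
move=> d_gt0 Rad_gt0 Rad_rT_ge1 count s us s_ball.
have e_gt1 : 1 < expR d%:R^-1 :> R by rewrite expR_gt1 invr_gt0 ltr0n.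
apply: count => //.
  by rewrite -mulrA (lt_le_trans e_gt1) // ler_peMr // ltW // (lt_trans ltr01).
apply: sub_all s_ball => y /set_mem [Ly y_in]; apply/mem_set; split=> //.
by apply: lt_le_trans y_in _; rewrite ler_peMl ?ltW.
Qed.

Theorem lemma3p6 (d0 : measure_display) (Om : measurableType d0)
  (R : realType) (P : probability Om R) (d : nat) (alpha : R)
  (xi : 'rV[int]_d -> {RV P >-> R})
  (Cd T Rad t : R) :
  (0 < d)%N -> d%:R < alpha ->
  (* xi(z), z in Z^d, i.i.d. Pareto(alpha) with values in [1, oo) *)
  mutually_independent xi ->
  (forall z x, 1 <= x -> P [set w | x < xi z w] = (x `^ (- alpha))%:E) ->
  (forall z w, 1 <= xi z w) ->
  (* the constant C_d *)
  0 < Cd ->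
  (forall T' Rad', 1 < T' -> 1 < Rad' * rT d alpha T' ->
     forall s : seq 'rV[R]_d, uniq s -> all (fun y => y \in LTball d alpha T' 0 Rad') s ->
       (size s)%:R <= Cd * Rad' ^+ d * rT d alpha T' ^+ d) ->
  1 < T -> 0 < Rad -> 0 < t -> 1 <= Rad * rT d alpha T ->
  ([set w | exists z, LT d alpha T z /\ ~ l1ball d 0 Rad z /\
        hT d alpha (fun y => xi y w) T z <= t]
   `<=` [set w | exists y, LTball d alpha T 0 Rad y /\
        qexp d alpha * Rad / t <= xiT d alpha (fun y => xi y w) T y])
  /\
  (P [set w | exists z, LT d alpha T z /\ ~ l1ball d 0 Rad z /\
        (hT d alpha (fun y => xi y w) T z <= t)%R]
   <= (Cd * expR 1 * qexp d alpha `^ (- alpha) * Rad `^ (d%:R - alpha)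
       * t `^ alpha)%R%:E)%E.
Proof.
move=> d_gt0 lt_d_alpha _ tail xi_ge1 _ count T_gt1 Rad_gt0 t_gt0 Rad_rT_ge1.
have q_gt0 := qexp_gt0 d_gt0 lt_d_alpha.
have xi_gt0 k w : 0 < xi k w := lt_le_trans ltr01 (xi_ge1 k w).
have mxi k : measurable_fun setT (xi k) := measurable_funPT (xi k).
have ball_count := LTball_size_le d_gt0 Rad_gt0 Rad_rT_ge1 (count T ^~ T_gt1).
have [s [us s_ball cover]] := exists_enum_of_bounded_uniq ball_count.
have large w z : ~ l1ball d 0 Rad z -> hT d alpha (fun y => xi y w) T z <= t ->
    exists2 y, y \in s & qexp d alpha * Rad / t <= xiT d alpha (fun y => xi y w) T y.
  exact: (far_hT_le_has_large_xiT (ltW q_gt0) (xiT_gt0 alpha xi_gt0 T_gt1 w)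
            Rad_gt0 t_gt0 cover).
split.
  move=> w [z [_ [far hTz]]]; have [y ys le_y] := large w z far hTz.
  by exists y; split=> //; exact/set_mem/(allP s_ball).
set event := [set w | _]; set x := qexp d alpha * Rad / t * aT d alpha T.
have event_sub : event `<=` \big[setU/set0]_(y <- s) [set w | x <= xi (toZ d alpha T y) w].
  move=> w [z [_ [far hTz]]]; have [y ys le_y] := large w z far hTz.
  by rewrite -bigcup_seq; exists y => //=; rewrite -ler_pdivlMr ?aT_gt0.
have x_gt0 : 0 < x by rewrite mulr_gt0 ?aT_gt0 // divr_gt0 // mulr_gt0.
apply: le_trans (le_measure _ _ _ event_sub) _; rewrite ?inE.
- exact: measurable_far_hT_le mxi xi_gt0 T_gt1 (ltW q_gt0) Rad t.
- by apply: bigsetU_measurable => y _; exact: measurable_le_fun.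
apply: le_trans (pareto_bigsetU_le _ _ _ mxi tail x_gt0) _;
  first exact: le_lt_trans lt_d_alpha.
by rewrite lee_fin; exact: count_mul_tail_le (ball_count _ us s_ball).
Qed.
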